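(* Let $r\ge 1$ and $g\ge 3$ be integers and let $n[1,r;g]$ denote the order of a $[1,r;g]$-mixed cage. Then $$n[1,r;g]\ \ge\ \begin{cases} 2\left(1+\sum_{i=1}^{(g-3)/2} n_0(r,2i+1)\right)+n_0(r,g) & \text{if } g \text{ is odd},\\[1mm] 2\left(1+\sum_{i=1}^{(g-2)/2} n_0(r,2i+1)\right) & \text{if } g \text{ is even},\end{cases}$$ where $n_0(r,g)=1+r+r(r-1)+\cdots+r(r-1)^{(g-3)/2}$ for odd $g$ and $n_0(r,g)=2\left(1+(r-1)+\cdots+(r-1)^{g/2-1}\right)$ for even $g$.
   Context: A mixed graph is a finite graph that may contain both edges and arcs. A $[z,r;g]$-mixed graph is a mixed graph in which every vertex is the tail of exactly $z$ arcs, the head of exactly $z$ arcs, and is incident with exactly $r$ edges, and whose girth is $g$. Walks traverse edges in either direction and arcs only in their direction; a cycle is a closed walk with no repeated vertices (other than start = end) and no repeated edge or arc; the girth is the length of a shortest cycle. A $[z,r;g]$-mixed cage is a $[z,r;g]$-mixed graph of minimum order. *)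

From mathcomp Require Import all_boot.
Set Implicit Arguments. Unset Strict Implicit. Unset Printing Implicit Defensive.

(* A (simple) mixed graph on a finite vertex type T is given by
   - E : rel T, the edge relation (symmetric: E u v means {u,v} is an edge),
   - A : rel T, the arc relation (A u v means there is an arc u -> v). *)

Definition step_ok (T : finType) (E A : rel T) (st : bool * T * T) : bool :=
  let: (b, u, v) := st in if b then A u v else E u v.

Definition same_link (T : finType) (s1 s2 : bool * T * T) : bool :=
  let: (b1, u1, v1) := s1 in
  let: (b2, u2, v2) := s2 in
  (b1 == b2) &&
  (if b1 then (u1 == u2) && (v1 == v2)
   else ((u1 == u2) && (v1 == v2)) || ((u1 == v2) && (v1 == u2))).

Definition cyc_steps (T : finType) (c : seq T) (bs : seq bool) (x0 : T)
  : seq (bool * T * T) :=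
  [seq (nth false bs i, nth x0 c i, nth x0 c ((i + 1) %% size c))
  | i <- iota 0 (size c)].

Definition has_cycle_of_length (T : finType) (E A : rel T) (k : nat) : Prop :=
  exists (x : T) (c' : seq T) (bs : seq bool),
    let c := x :: c' in
    [/\ size c = k, size bs = k, uniq c,
        all (step_ok E A) (cyc_steps c bs x) &
        forall i j, i < k -> j < k -> i != j ->
          ~~ same_link (nth (false, x, x) (cyc_steps c bs x) i)
                       (nth (false, x, x) (cyc_steps c bs x) j)].

Definition girth_is (T : finType) (E A : rel T) (g : nat) : Prop :=
  has_cycle_of_length E A g /\
  forall k, k < g -> ~ has_cycle_of_length E A k.

Definition is_mixed_graph (z r g : nat) (T : finType) (E A : rel T) : Prop :=
  [/\ symmetric E, irreflexive E /\ irreflexive A,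
      (forall u : T, #|[set v | A u v]| = z /\ #|[set v | A v u]| = z),
      (forall u : T, #|[set v | E u v]| = r) &
      girth_is E A g].

Definition is_mixed_cage (z r g : nat) (T : finType) (E A : rel T) : Prop :=
  is_mixed_graph z r g E A /\
  forall (T' : finType) (E' A' : rel T'), is_mixed_graph z r g E' A' -> #|T| <= #|T'|.

Definition n0 (r g : nat) : nat :=
  if odd g then 1 + r * \sum_(0 <= j < ((g - 3)./2).+1) (r - 1) ^ j
  else 2 * \sum_(0 <= j < g./2) (r - 1) ^ j.

Definition mixed_bound (r g : nat) : nat :=
  if odd g then 2 * (1 + \sum_(1 <= i < ((g - 3)./2).+1) n0 r (2 * i + 1)) + n0 r g
  else 2 * (1 + \sum_(1 <= i < ((g - 2)./2).+1) n0 r (2 * i + 1)).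

From mathcomp Require Import all_boot zify.
Set Implicit Arguments. Unset Strict Implicit. Unset Printing Implicit Defensive.

(* Follow the out-arcs from a vertex: x_0 -> x_1 -> ... -> x_(g-1).  From each
   x_p start every non-backtracking edge walk of length at most
   min(p, g-1-p); there are n_0(r, 2 min(p, g-1-p) + 1) of them.  If walks from
   x_p and x_q (p <= q) ended at the same vertex, then after cancelling their
   common final segment the arcs x_p -> ... -> x_q, the walk from x_q and the
   reversed walk from x_p form a closed walk of length at most
   (q - p) + (g-1-q) + p = g - 1 which never immediately retraces an edge, so
   it contains a cycle shorter than g.  Hence all the endpoints are distinct,
   and summing the counts over p gives the bound. *)

Definition moore_ball (r k : nat) : nat := 1 + r * \sum_(0 <= j < k) (r - 1) ^ j.

Lemma moore_ball0 r : moore_ball r 0 = 1.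
Proof. by rewrite /moore_ball big_geq ?muln0. Qed.

Lemma n0_moore_ball r i : 0 < i -> n0 r (2 * i + 1) = moore_ball r i.
Proof.
case: i => [|i] // _; rewrite /n0 addn1 mul2n /= odd_double /=.
by rewrite (_ : i.+1.*2.+1 - 3 = i.*2) ?doubleK //; lia.
Qed.

Lemma big_minn_sym_even (F : nat -> nat) m :
  \sum_(0 <= p < (2 * m).+1) F (minn p (2 * m - p)) = 2 * \sum_(0 <= i < m) F i + F m.
Proof.
rewrite (@big_cat_nat _ _ _ m.+1) //=; last lia.
rewrite (@eq_big_nat _ _ _ 0 m.+1 _ F) => [|p /andP[_ hp]]; last by congr F; lia.
rewrite big_nat_recr //= (big_addn 0 _ m.+1).
have -> : (2 * m).+1 - m.+1 = m by lia.
rewrite [X in _ + X]big_nat_rev /= (@eq_big_nat _ _ _ 0 m _ F); first lia.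
by move=> i /andP[_ hi]; congr F; lia.
Qed.

Lemma big_minn_sym_odd (F : nat -> nat) m :
  \sum_(0 <= p < (2 * m).+2) F (minn p ((2 * m).+1 - p)) = 2 * \sum_(0 <= i < m.+1) F i.
Proof.
rewrite (@big_cat_nat _ _ _ m.+1) //=; last lia.
rewrite (@eq_big_nat _ _ _ 0 m.+1 _ F) => [|p /andP[_ hp]]; last by congr F; lia.
rewrite (big_addn 0 _ m.+1).
have -> : (2 * m).+2 - m.+1 = m.+1 by lia.
rewrite [X in _ + X]big_nat_rev /= (@eq_big_nat _ _ _ 0 m.+1 _ F); first lia.
by move=> i /andP[_ hi]; congr F; lia.
Qed.

Lemma mixed_bound_sum r g : 3 <= g ->
  mixed_bound r g = \sum_(0 <= p < g) moore_ball r (minn p (g.-1 - p)).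
Proof.
move=> g3; rewrite /mixed_bound.
have n0E m : \sum_(1 <= i < m) n0 r (2 * i + 1) = \sum_(1 <= i < m) moore_ball r i.
  by apply: eq_big_nat => i /andP[i1 _]; rewrite n0_moore_ball.
have := odd_double_half g; set m := g./2; case: (odd g) => /= gE.
- have -> : g = (2 * m).+1 by lia.
  have -> : ((2 * m).+1 - 3)./2 = m.-1 by rewrite (_ : _ - 3 = m.-1.*2) ?doubleK //; lia.
  have m0 : 0 < m by lia.
  rewrite succnK big_minn_sym_even prednK // n0E (big_ltn m0) moore_ball0.
  by rewrite -[(2 * m).+1]addn1 n0_moore_ball.
- have -> : g = (2 * m.-1).+2 by lia.
  have -> : ((2 * m.-1).+2 - 2)./2 = m.-1 by rewrite (_ : _ - 2 = m.-1.*2) ?doubleK //; lia.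
  by rewrite succnK big_minn_sym_odd n0E [in RHS]big_ltn // moore_ball0.
Qed.

Lemma exists_simple_subwalk (T : eqType) (f : nat -> T) L : 0 < L -> f L = f 0 ->
  exists a d, [/\ 0 < d, a + d <= L, f (a + d) = f a &
    forall s s', s < s' <= d -> f (a + s) = f (a + s') -> s = 0 /\ s' = d].
Proof.
move=> L0 fL.
pose P d := (0 < d) && has (fun a => (a + d <= L) && (f a == f (a + d))) (iota 0 L.+1).
have exP : exists d, P d.
  exists L; rewrite /P L0; apply/hasP; exists 0; first by rewrite mem_iota.
  by rewrite add0n leqnn fL eqxx.
case: (ex_minnP exP) => d /andP[d0 /hasP[a _ /andP[adL /eqP fa]]] dmin.
exists a, d; split=> // s s' /andP[ss' s'd] fs.
suff : d <= s' - s by lia.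
apply: dmin; rewrite /P subn_gt0 ss'; apply/hasP; exists (a + s).
  by rewrite mem_iota; lia.
by rewrite fs (_ : a + s + (s' - s) = a + s') ?eqxx ?andbT; lia.
Qed.

Section ClosedWalk.
Variables (T : finType) (E A : rel T).

Lemma cyc_steps_iota (h : nat -> T) (tb : nat -> bool) d : h d = h 0 ->
  cyc_steps [seq h i | i <- iota 0 d] [seq tb i | i <- iota 0 d] (h 0)
  = [seq (tb i, h i, h i.+1) | i <- iota 0 d].
Proof.
move=> hd; rewrite /cyc_steps size_map size_iota; apply/eq_in_map => i.
rewrite mem_iota add0n => /= id.
rewrite (nth_map 0) ?size_iota // (nth_map 0) ?size_iota // nth_iota // add0n addn1.
case: (ltngtP i.+1 d) => h_id; [|lia|].
- by rewrite modn_small // (nth_map 0) ?size_iota // nth_iota.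
- by subst d; rewrite modnn (nth_map 0) //= hd.
Qed.

Lemma simple_closed_walk_cycle (h : nat -> T) (tb : nat -> bool) d :
  0 < d -> h d = h 0 ->
  (forall s s', s < s' <= d -> h s = h s' -> s = 0 /\ s' = d) ->
  (forall i, i < d -> step_ok E A (tb i, h i, h i.+1)) ->
  (forall i, i.+1 < d -> ~~ tb i -> ~~ tb i.+1 -> h i != h i.+2) ->
  has_cycle_of_length E A d.
Proof.
move=> d0 hd hsimple hstep hnb.
have hinj i j : i <= d -> j <= d -> h i = h j -> i = j \/ minn i j = 0 /\ maxn i j = d.
  move=> id jd hij; case: (ltngtP i j) => lt; last by left.
  - by have [] := hsimple i j (ltac:(lia)) hij; right; lia.
  - by have [] := hsimple j i (ltac:(lia)) (esym hij); right; lia.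
have reversal i j : i < d -> j < d -> i != j -> h i = h j.+1 -> h i.+1 = h j ->
    d = 2 /\ i + j = 1.
  move=> id jd ij h1 h2.
  by have [|] := hinj i j.+1 (ltnW id) jd h1; have [|] := hinj i.+1 j id (ltnW jd) h2; lia.
exists (h 0), [seq h i | i <- iota 1 d.-1], [seq tb i | i <- iota 0 d].
have -> : h 0 :: [seq h i | i <- iota 1 d.-1] = [seq h i | i <- iota 0 d].
  by case: (d) d0.
cbv zeta; rewrite cyc_steps_iota //; split; rewrite ?size_map ?size_iota //.
- rewrite map_inj_in_uniq ?iota_uniq // => i j.
  rewrite !mem_iota !add0n => /= id jd /(hinj i j (ltnW id) (ltnW jd)) [|[]]; lia.
- by rewrite all_map; apply/allP => i; rewrite mem_iota => /= id; apply: hstep.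
move=> i j id jd ij; rewrite !(nth_map 0) ?size_iota // !nth_iota // !add0n /=.
case tbi: (tb i); case tbj: (tb j) => //=; apply/negP.
- case/andP=> /eqP /(hinj i j (ltnW id) (ltnW jd)); lia.
- case/orP=> /andP[/eqP h1 /eqP h2].
    by move: h1 => /(hinj i j (ltnW id) (ltnW jd)); lia.
  have [d2 ij1] := reversal i j id jd ij h1 h2.
  have [tb0 tb1] : ~~ tb 0 /\ ~~ tb 1.
    by case: i j ij1 tbi tbj {id jd ij h1 h2} => [|[|i]] [|[|j]] //= _ -> ->.
  by move: (hnb 0 ltac:(lia) tb0 tb1); rewrite -d2 hd eqxx.
Qed.

Lemma closed_walk_cycle (f : nat -> T) (tb : nat -> bool) L :
  0 < L -> f L = f 0 ->
  (forall i, i < L -> step_ok E A (tb i, f i, f i.+1)) ->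
  (forall i, i.+1 < L -> ~~ tb i -> ~~ tb i.+1 -> f i != f i.+2) ->
  exists2 k, 0 < k <= L & has_cycle_of_length E A k.
Proof.
move=> L0 fL hstep hnb.
have [a [d [d0 adL fad hsimple]]] := exists_simple_subwalk L0 fL.
exists d; first by rewrite d0; lia.
apply: (@simple_closed_walk_cycle (fun s => f (a + s)) (fun s => tb (a + s))).
- exact: d0.
- by rewrite addn0.
- exact: hsimple.
- by move=> i id; rewrite addnS; apply: hstep; lia.
- by move=> i id; rewrite !addnS; apply: hnb; lia.
Qed.

End ClosedWalk.

Section NonBacktracking.
Variable T : eqType.

Fixpoint nonbacktracking (s : seq T) : bool :=
  if s is a :: ((_ :: c :: _) as t) then (a != c) && nonbacktracking t else true.

Lemma nonbacktrackingP x0 s :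
  reflect (forall i, i.+2 < size s -> nth x0 s i != nth x0 s i.+2) (nonbacktracking s).
Proof.
elim: s => [|a [|b [|c t]] IH]; try by constructor.
apply: (iffP andP) => [[ac /IH nbt] [|i] hi //|h]; first exact: nbt.
by split; [exact: (h 0) | apply/IH => i; apply: (h i.+1)].
Qed.

Lemma nonbacktracking_rev s : nonbacktracking (rev s) = nonbacktracking s.
Proof.
suff nb_rev t : nonbacktracking t -> nonbacktracking (rev t).
  by apply/idP/idP => /nb_rev //; rewrite revK.
case: t => [//|x0 t]; set t' := x0 :: t; clearbody t' => /(nonbacktrackingP x0) h.
apply/(nonbacktrackingP x0) => i; rewrite size_rev => hi.
rewrite !nth_rev; [|lia..].
rewrite (_ : size t' - i.+1 = (size t' - i.+3).+2); last lia.
by rewrite eq_sym h //; lia.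
Qed.

Lemma nonbacktracking_catl s1 s2 : nonbacktracking (s1 ++ s2) -> nonbacktracking s1.
Proof.
case: s1 => [//|x0 s1] /(nonbacktrackingP x0) h; apply/(nonbacktrackingP x0) => i hi.
by have := h i ltac:(rewrite size_cat; lia); rewrite !nth_cat hi ltnW // ltnW.
Qed.

Lemma nonbacktracking_cat s1 y s2 :
  nonbacktracking (rcons s1 y) -> nonbacktracking (y :: s2) ->
  (s1 != [::] -> s2 != [::] -> last y s1 != head y s2) ->
  nonbacktracking (s1 ++ y :: s2).
Proof.
move=> /(nonbacktrackingP y) h1 /(nonbacktrackingP y) h2 hj.
apply/(nonbacktrackingP y) => i; rewrite size_cat /= => hi.
set n := size s1.
have nthl k : k <= n -> nth y (s1 ++ y :: s2) k = nth y (rcons s1 y) k.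
  move=> kn; rewrite -cats1 !nth_cat; case: ltnP => // nk.
  by rewrite (_ : k - n = 0) //; lia.
have nthr k : n <= k -> nth y (s1 ++ y :: s2) k = nth y (y :: s2) (k - n).
  by move=> kn; rewrite nth_cat ltnNge kn.
case: (leqP i.+2 n) => [i2n|n_lt_i2].
  rewrite !nthl ?(ltnW i2n) ?(ltnW (ltnW i2n)) //.
  by apply: h1; rewrite size_rcons; lia.
case: (leqP n i) => [ni|i_lt_n].
  rewrite !nthr ?(leqW (leqW ni)) ?(leqW ni) // (_ : i.+2 - n = (i - n).+2); last lia.
  by apply: h2 => /=; lia.
have ei : i = n.-1 by lia.
have s1n : s1 != [::] by rewrite -size_eq0 -/n; lia.
have s2n : s2 != [::] by rewrite -size_eq0; lia.
rewrite nthl ?nthr; [|lia..].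
rewrite (_ : i.+2 - n = 1) /= ?nth0; last lia.
by rewrite -cats1 nth_cat (_ : i < n) ?ei ?nth_last; [apply: hj|lia].
Qed.

Lemma nonbacktracking_cat_rev s1 s2 y :
  nonbacktracking (rcons s1 y) -> nonbacktracking (rcons s2 y) ->
  (s1 != [::] -> s2 != [::] -> last y s1 != last y s2) ->
  nonbacktracking (s1 ++ y :: rev s2).
Proof.
move=> nb1 nb2 hj; apply: nonbacktracking_cat => //.
  by rewrite -rev_rcons nonbacktracking_rev.
case/lastP: s2 {nb2} hj => [//|s2 a] hj s1n _.
by rewrite rev_rcons -(last_rcons y s2 a) hj // -size_eq0 size_rcons.
Qed.

End NonBacktracking.

Section NonBacktrackingWalks.
Variables (T : finType) (E : rel T).

(* [prev] is the vertex the walk arrives from, which its first step must avoid. *)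
Fixpoint nb_walks (k : nat) (prev : option T) (v : T) : seq (seq T) :=
  if k is k'.+1 then
    [::] :: [seq w :: s | w <- enum [pred w | E v w && (Some w != prev)],
                          s <- nb_walks k' (Some v) w]
  else [:: [::]].

Lemma nb_walksP k prev v s : s \in nb_walks k prev v ->
  [/\ size s <= k, path E v s &
      nonbacktracking (if prev is Some u then u :: v :: s else v :: s)].
Proof.
elim: k prev v s => [|k IH] prev v s /=.
  by rewrite inE => /eqP ->; case: prev.
rewrite inE => /predU1P[-> |]; first by case: prev.
case/allpairsPdep=> w [s' [+ /IH[sz pth nb] ->]]; rewrite mem_enum inE => /andP[Evw wprev].
split=> //=; first by rewrite Evw.
case: prev wprev => // u wu; apply/andP; split=> //.
by apply: contra wu => /eqP->.
Qed.

Lemma nb_walks_uniq k prev v : uniq (nb_walks k prev v).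
Proof.
elim: k prev v => [//|k IH] prev v /=; apply/andP; split.
  by apply/negP => /allpairsPdep[w [s [_ _]]].
apply: allpairs_uniq_dep => [|w _|[w1 s1] [w2 s2] _ _ /= [-> ->]] //.
exact: enum_uniq.
Qed.

Lemma size_nb_walksS k prev v c :
  (forall w, E v w -> size (nb_walks k (Some v) w) = c) ->
  size (nb_walks k.+1 prev v) = 1 + #|[pred w | E v w && (Some w != prev)]| * c.
Proof.
move=> hc; rewrite /= size_allpairs_dep sumnE big_map big_enum /= -sum_nat_const.
by rewrite add1n; congr S; apply: eq_bigr => w /andP[/hc].
Qed.

Variable r : nat.
Hypotheses (Esym : symmetric E) (Ereg : forall u, #|[set v | E u v]| = r).

Lemma size_nb_walks_Some k u v : E u v ->
  size (nb_walks k (Some u) v) = \sum_(0 <= j < k.+1) (r - 1) ^ j.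
Proof.
elim: k u v => [|k IH] u v Euv; first by rewrite big_nat1.
rewrite (@size_nb_walksS _ _ _ (\sum_(0 <= j < k.+1) (r - 1) ^ j)) => [|w]; last exact: IH.
have -> : #|[pred w | E v w && (Some w != Some u)]| = r - 1.
  rewrite -(Ereg v) (cardD1 u [set w | E v w]) inE Esym Euv add1n subSS subn0.
  by apply: eq_card => w; rewrite !inE andbC.
rewrite [RHS]big_nat_recl // expn0 big_distrr /=; congr (_ + _).
by apply: eq_bigr => j _; rewrite expnS.
Qed.

Lemma size_nb_walks_None k v : size (nb_walks k None v) = moore_ball r k.
Proof.
case: k => [|k]; first by rewrite moore_ball0.
rewrite (@size_nb_walksS _ _ _ (\sum_(0 <= j < k.+1) (r - 1) ^ j)) => [|w]; last first.
  exact: size_nb_walks_Some.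
by rewrite (@eq_card _ _ [set w | E v w]) ?Ereg // => w; rewrite !inE andbT.
Qed.

End NonBacktrackingWalks.

Section Spine.
Variables (T : finType) (E A : rel T) (next : T -> T) (g : nat) (x0 : T).
Hypotheses (Esym : symmetric E) (A_next : forall u, A u (next u)).
Hypothesis no_short_cycle : forall k, k < g -> ~ has_cycle_of_length E A k.

Definition spine i := iter i next x0.

Definition radius p := minn p (g.-1 - p).

Definition spine_walk p w :=
  [&& size w <= radius p, path E (spine p) w & nonbacktracking (spine p :: w)].

Lemma no_short_spine_loop p q U : p <= q ->
  path E (spine q) U -> last (spine q) U = spine p -> nonbacktracking (spine q :: U) ->
  0 < q - p + size U < g -> False.
Proof.
move=> pq pU lastU nbU /andP[L0 Lg].
(* The closed walk: q - p arcs along the spine from [spine p], then back along [U]. *)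
set V := [seq spine i | i <- iota p (q - p)] ++ spine q :: U.
have nth_arc i : i <= q - p -> nth x0 V i = spine (p + i).
  move=> iqp; rewrite nth_cat size_map size_iota; case: ltnP => [lt|ge].
    by rewrite (nth_map 0) ?size_iota // nth_iota.
  by rewrite (_ : i = q - p) ?subnn /= ?subnKC //; lia.
have nth_edge i : q - p <= i -> nth x0 V i = nth x0 (spine q :: U) (i - (q - p)).
  by move=> qpi; rewrite nth_cat size_map size_iota ltnNge qpi.
set L := q - p + size U.
have closed : nth x0 V L = nth x0 V 0.
  rewrite [RHS]nth_arc // addn0 nth_edge ?leq_addr // addKn.
  by rewrite -[size U]/((size (spine q :: U)).-1) nth_last.
have steps i : i < L -> step_ok E A (i < q - p, nth x0 V i, nth x0 V i.+1).
  move=> iL; case: ltnP => [iqp|qpi] /=.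
    by rewrite !nth_arc ?(ltnW iqp) // addnS; apply: A_next.
  rewrite !nth_edge ?(leqW qpi) // subSn //.
  by move/(pathP x0): pU; apply; lia.
have edges_nb i : i.+1 < L -> ~~ (i < q - p) -> ~~ (i.+1 < q - p) ->
    nth x0 V i != nth x0 V i.+2.
  move=> iL; rewrite -leqNgt => qpi _.
  rewrite !nth_edge ?(leqW (leqW qpi)) ?(leqW qpi) // !subSn ?(leqW qpi) //.
  by move/(nonbacktrackingP x0): nbU; apply => /=; lia.
have [k /andP[_ kL] cyc] := closed_walk_cycle L0 closed steps edges_nb.
by apply: (no_short_cycle _ cyc); lia.
Qed.

Lemma spine_walks_no_meet p q w w' y : p <= q <= g.-1 ->
  spine_walk p w -> spine_walk q w' -> last (spine p) w = y -> last (spine q) w' = y ->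
  (p, w) != (q, w') ->
  (* [last y (belast x s)] is the vertex preceding [y] on [x :: s]. *)
  (w != [::] -> w' != [::] -> last y (belast (spine p) w) != last y (belast (spine q) w')) ->
  False.
Proof.
case/andP=> pq qg /and3P[sw pw nbw] /and3P[sw' pw' nbw'] yw yw' neq junction.
apply: (@no_short_spine_loop p q (w' ++ rev (belast (spine p) w))) => //.
- rewrite cat_path pw' yw' -yw rev_path /=.
  by rewrite (@eq_path _ _ E) // => a b; rewrite Esym.
- rewrite last_cat yw' -yw.
  by case: (w) => [|a w0] //=; rewrite rev_cons last_rcons.
- rewrite -cat_cons (lastI (spine q) w') yw' cat_rcons nonbacktracking_cat_rev //.
  + by rewrite -yw' -lastI.
  + by rewrite -yw -lastI.
  + by rewrite -!size_eq0 !size_belast => nw' nw; rewrite eq_sym junction // -size_eq0.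
rewrite size_cat size_rev size_belast.
have pos : 0 < q - p + (size w' + size w).
  rewrite lt0n; apply: contra neq => /eqP sz0.
  have [-> ->] : w = [::] /\ w' = [::] by split; apply/nilP; rewrite /nilp; lia.
  by rewrite (_ : p = q) //; lia.
by rewrite pos /=; rewrite /radius in sw sw'; lia.
Qed.

Lemma spine_walk_rcons p w a : spine_walk p (rcons w a) -> spine_walk p w.
Proof.
case/and3P=> sw pw nbw; apply/and3P; split.
- by rewrite size_rcons in sw; lia.
- by rewrite rcons_path in pw; case/andP: pw.
- by rewrite -cats1 -cat_cons in nbw; apply: nonbacktracking_catl nbw.
Qed.

Lemma spine_walk_inj p q w w' : p <= q <= g.-1 ->
  spine_walk p w -> spine_walk q w' -> last (spine p) w = last (spine q) w' ->
  p = q /\ w = w'.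
Proof.
move=> pqg; elim/last_ind: w w' => [|w a IH] w' okw okw' ey.
  case: (eqVneq (p, [::]) (q, w')) => [[-> <-] //|neq]; exfalso.
  by apply: (spine_walks_no_meet pqg okw okw' ey (erefl _) neq); rewrite eqxx.
case: (eqVneq (p, rcons w a) (q, w')) => [[-> <-] //|neq]; exfalso.
have meet := spine_walks_no_meet pqg okw okw' ey (erefl _) neq.
case/lastP: w' okw' ey neq meet => [|w' a'] okw' ey neq meet.
  by apply: meet => _; rewrite eqxx.
rewrite !last_rcons in ey; rewrite !belast_rcons /= in meet.
case: (eqVneq (last (spine p) w) (last (spine q) w')) => [e|]; last first.
  by move=> ne; apply: meet => // _ _; rewrite ey.
have [pq ww'] := IH w' (spine_walk_rcons okw) (spine_walk_rcons okw') e.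
by move: neq; rewrite pq ww' ey eqxx.
Qed.

Variable r : nat.
Hypothesis Ereg : forall u, #|[set v | E u v]| = r.

Lemma sum_moore_ball_radius_le_card : \sum_(0 <= p < g) moore_ball r (radius p) <= #|T|.
Proof.
set labels := [seq (p, w) | p <- iota 0 g, w <- nb_walks E (radius p) None (spine p)].
have labels_uniq : uniq labels.
  apply: allpairs_uniq_dep => [|p _|[p1 w1] [p2 w2] _ _ /= [-> ->]] //.
    exact: iota_uniq.
  exact: nb_walks_uniq.
have labels_walk l : l \in labels -> l.1 <= g.-1 /\ spine_walk l.1 l.2.
  case/allpairsPdep=> p [w [+ /nb_walksP[sz pth nb] ->]]; rewrite mem_iota /= => pg.
  by split; [lia | apply/and3P].
have end_inj : {in labels &, injective (fun l => last (spine l.1) l.2)}.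
  move=> [p w] [q w'] /labels_walk[/= pg okw] /labels_walk[/= qg okw'] /= ey.
  have [pq|qp] := leqP p q.
    by have [-> ->] := spine_walk_inj (ltac:(lia) : p <= q <= g.-1) okw okw' ey.
  by have [-> ->] := spine_walk_inj (ltac:(lia) : q <= p <= g.-1) okw' okw (esym ey).
have := max_card (mem [seq last (spine l.1) l.2 | l <- labels]).
rewrite (card_uniqP _) ?map_inj_in_uniq // size_map size_allpairs_dep.
rewrite (eq_map (fun p => size_nb_walks_None Esym Ereg _ (spine p))).
by rewrite sumnE big_map /index_iota subn0.
Qed.
End Spine.

Theorem theorem2 (r g : nat) (hr : 1 <= r) (hg : 3 <= g)
  (T : finType) (E A : rel T) :
  is_mixed_cage 1 r g E A -> mixed_bound r g <= #|T|.
Proof.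
move=> [[Esym _ hA hE [[x0 _] short]] _].
pose next u := odflt u [pick v | A u v].
have A_next u : A u (next u).
  have /set0Pn[v] : [set v | A u v] != set0 by rewrite -cards_eq0 (hA u).1.
  by rewrite inE /next; case: pickP => [//|/(_ v) ->].
rewrite mixed_bound_sum //.
exact: (sum_moore_ball_radius_le_card x0 Esym A_next short hE).
Qed.
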